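(* There exists an alternating Streett automaton $\mathcal{A}$ on infinite words, with all transition conditions in disjunctive normal form, that is $\exists$-GFG but for which there is no function $f\colon\Sigma^+\to\mathrm{Boxes}_{\mathcal{A}}$ with $f(ua)\in\mathrm{Boxes}_{\mathcal{A},a}$ for all $u\in\Sigma^*,a\in\Sigma$ such that, for every $w=w_0w_1\dots\in L(\mathcal{A})$, the sequence $f(w_0)f(w_0w_1)f(w_0w_1w_2)\cdots$ is universally accepting for $\mathcal{A}$.
   Context: An alternating automaton $\mathcal{A}=(\Sigma,Q,\iota,\delta,\alpha)$ has finite alphabet $\Sigma$, states $Q$, initial state $\iota$, transition function $\delta\colon Q\times\Sigma\to\mathcal{B}^+(Q)$ (positive Boolean formulas over atoms in $Q$); transitions are triples $(q,a,q')$. A Streett condition is a finite set of pairs $(B_i,G_i)$ of sets of transitions; an infinite transition sequence is accepting iff for every $i$ it visits $B_i$ finitely often or $G_i$ infinitely often. $L(\mathcal{A})$: in the model-checking game on $w=a_0a_1\dots$, from $\iota$, in round $i$ from $q_i$ the players descend $\delta(q_i,a_i)$, Eve choosing at disjunctions and Adam at conjunctions, to an atom $q_{i+1}$; Eve wins iff the transition sequence is accepting; $w\in L(\mathcal{A})$ iff Eve wins. Eve's letter game: each round Adam picks a letter and the players descend the transition condition of the current state over it; Eve wins iff the word is not in $L(\mathcal{A})$ or the path is accepting; $\mathcal{A}$ is $\exists$-GFG iff Eve wins it. Boxes: for a letter $a$, a local strategy chooses, for each $q$ and each subformula $\psi_1\vee\psi_2$ of $\delta(q,a)$, one disjunct;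 its box is the set of $(q,a,q')$ such that atom $q'$ is reachable from $\delta(q,a)$ following the local strategy at disjunctions and either conjunct at conjunctions; $\mathrm{Boxes}_{\mathcal{A},a}$ is the set of these boxes and $\mathrm{Boxes}_{\mathcal{A}}=\bigcup_a\mathrm{Boxes}_{\mathcal{A},a}$. A sequence of boxes $\beta_0\beta_1\dots$ is universally accepting if every transition sequence $(q_i,a_i,q_{i+1})_i$ with $q_0=\iota$ and $(q_i,a_i,q_{i+1})\in\beta_i$ for all $i$ is accepting. *)

From mathcomp Require Import all_boot.
Set Implicit Arguments. Unset Strict Implicit. Unset Printing Implicit Defensive.

Inductive pbf (Q : Type) : Type :=
  | PAtom of Q
  | PAnd of pbf Q & pbf Q
  | POr of pbf Q & pbf Q.
Arguments PAtom {Q}. Arguments PAnd {Q}. Arguments POr {Q}.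

Fixpoint is_clause (Q : Type) (phi : pbf Q) : bool :=
  match phi with
  | PAtom _ => true
  | PAnd f g => is_clause f && is_clause g
  | POr _ _ => false
  end.
Fixpoint is_dnf (Q : Type) (phi : pbf Q) : bool :=
  match phi with
  | POr f g => is_dnf f && is_dnf g
  | _ => is_clause phi
  end.

Definition trans (Sigma Q : finType) := (Q * Sigma * Q)%type.

Record automaton (Sigma Q : finType) := Automaton {
  init : Q;
  delta : Q -> Sigma -> pbf Q;
  streett : seq ({set trans Sigma Q} * {set trans Sigma Q})
}.

Definition accepting (Sigma Q : finType) (A : automaton Sigma Q)
  (t : nat -> trans Sigma Q) : Prop :=
  forall BG, BG \in streett A ->
    (exists N, forall n, N <= n -> t n \notin BG.1) \/
    (forall N, exists2 n, N <= n & t n \in BG.2).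

(* Positions inside a formula are paths from the root (false = left, true = right).
   Descending a formula: Eve resolves disjunctions, Adam conjunctions. *)
Fixpoint descend (Q : Type) (phi : pbf Q) (eve adam : seq bool -> bool)
  (p : seq bool) : Q * seq bool :=
  match phi with
  | PAtom q => (q, p)
  | PAnd f g => if adam p then descend g eve adam (rcons p true)
                else descend f eve adam (rcons p false)
  | POr f g => if eve p then descend g eve adam (rcons p true)
               else descend f eve adam (rcons p false)
  end.

(* An Eve strategy (full information): given the history of completed rounds
   (state, letter, path taken in the transition condition), the current state,
   the current letter and the current position in the formula, choose a disjunct. *)
Definition eve_strategy (Sigma Q : finType) :=
  seq (Q * Sigma * seq bool) -> Q -> Sigma -> seq bool -> bool.

(* The play determined by Eve's strategy, the letters w and Adam's choices
   (adam n p = Adam's choice at conjunction position p in round n).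
   play n = (history before round n, state q_n). *)
Fixpoint play (Sigma Q : finType) (A : automaton Sigma Q) (sigma : eve_strategy Sigma Q)
  (w : nat -> Sigma) (adam : nat -> seq bool -> bool) (n : nat)
  : seq (Q * Sigma * seq bool) * Q :=
  match n with
  | 0 => ([::], init A)
  | n'.+1 =>
      let hq := play A sigma w adam n' in
      let qp := descend (delta A hq.2 (w n')) (sigma hq.1 hq.2 (w n')) (adam n') [::] in
      (rcons hq.1 (hq.2, w n', qp.2), qp.1)
  end.

Definition play_trans (Sigma Q : finType) (A : automaton Sigma Q)
  (sigma : eve_strategy Sigma Q) (w : nat -> Sigma) (adam : nat -> seq bool -> bool)
  (n : nat) : trans Sigma Q :=
  ((play A sigma w adam n).2, w n, (play A sigma w adam n.+1).2).

(* Language: w in L(A) iff Eve wins the model-checking game on w, i.e. has a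
   strategy such that every play consistent with it is accepting. *)
Definition inL (Sigma Q : finType) (A : automaton Sigma Q) (w : nat -> Sigma) : Prop :=
  exists sigma : eve_strategy Sigma Q,
    forall adam, accepting A (play_trans A sigma w adam).

(* Eve's letter game: Adam picks the letters (Eve sees each letter only when its
   round starts); Eve wins iff the word is not in L(A) or the play is accepting. *)
Definition exists_GFG (Sigma Q : finType) (A : automaton Sigma Q) : Prop :=
  exists sigma : eve_strategy Sigma Q,
    forall (w : nat -> Sigma) adam, inL A w -> accepting A (play_trans A sigma w adam).

Fixpoint reach (Q : Type) (phi : pbf Q) (e : seq bool -> bool) (p : seq bool) : seq Q :=
  match phi with
  | PAtom q => [:: q]
  | PAnd f g => reach f e (rcons p false) ++ reach g e (rcons p true)
  | POr f g => if e p then reach g e (rcons p true) else reach f e (rcons p false)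
  end.

(* The box of a local strategy s for letter a (s q = choices at disjunctions of delta q a). *)
Definition box_of (Sigma Q : finType) (A : automaton Sigma Q) (a : Sigma)
  (s : Q -> seq bool -> bool) : {set trans Sigma Q} :=
  [set t : trans Sigma Q | (t.1.2 == a) && (t.2 \in reach (delta A t.1.1 a) (s t.1.1) [::])].

Definition is_box (Sigma Q : finType) (A : automaton Sigma Q) (a : Sigma)
  (beta : {set trans Sigma Q}) : Prop :=
  exists s : Q -> seq bool -> bool, beta = box_of A a s.

Definition univ_accepting (Sigma Q : finType) (A : automaton Sigma Q)
  (beta : nat -> {set trans Sigma Q}) : Prop :=
  forall t : nat -> trans Sigma Q,
    (t 0).1.1 = init A ->
    (forall i, (t i).2 = (t i.+1).1.1) ->
    (forall i, t i \in beta i) ->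
    accepting A t.

Definition word_prefix (Sigma : Type) (w : nat -> Sigma) (n : nat) : seq Sigma :=
  [seq w i | i <- iota 0 n].

(* Over a one-letter alphabet, hub states branch universally into a hub, a
   request [Req false] and a request [Req true]; a request leads to [Vote],
   where Eve picks a grant [Grant b]; the Streett pairs demand that infinitely
   many [Req b] be answered by infinitely many [Grant b].  Eve wins the letter
   game by granting the request she has just come from.  A box, however, fixes
   the grant at [Vote] independently of the incoming request, so a sequence of
   boxes is a sequence of votes, one value [c] of which recurs infinitely often.
   The path that waits in the hub and enters [Req (~~ c)] exactly when the vote
   two steps ahead is [c] requests [~~ c] infinitely often and never grants it. *)

From mathcomp Require Import all_boot.
From HB Require Import structures.
From Stdlib Require Import Classical.
Set Implicit Arguments. Unset Strict Implicit. Unset Printing Implicit Defensive.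

Definition infinitely_often (P : nat -> Prop) : Prop :=
  forall N, exists2 n, N <= n & P n.

Lemma not_infinitely_often (P : nat -> Prop) :
  ~ infinitely_often P -> exists N, forall n, N <= n -> ~ P n.
Proof.
move=> not_inf; apply: NNPP => no_bound; apply: not_inf => N.
apply: NNPP => no_witness; apply: no_bound; exists N => n le_Nn Pn.
by apply: no_witness; exists n.
Qed.

Lemma bool_infinitely_often (d : nat -> bool) :
  exists c, infinitely_often (fun n => d n = c).
Proof.
case: (classic (infinitely_often (fun n => d n = true))) => [|not_true];
  first by exists true.
have [N false_after] := not_infinitely_often not_true.
exists false => M; exists (maxn N M); first exact: leq_maxr.
by apply/negbTE/negP/false_after/leq_maxl.
Qed.

Lemma word_prefixS (Sigma : Type) (w : nat -> Sigma) n :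
  word_prefix w n.+1 = rcons (word_prefix w n) (w n).
Proof. by rewrite /word_prefix -addn1 iotaD map_cat cats1. Qed.

Section Streett.
Variables (Sigma Q : finType) (A : automaton Sigma Q) (t : nat -> trans Sigma Q).

Lemma accepting_of_responses :
  (forall BG, BG \in streett A -> forall n, t n \in BG.1 ->
     exists2 m, n <= m & t m \in BG.2) ->
  accepting A t.
Proof.
move=> respond BG BG_in.
case: (classic (infinitely_often (fun n => t n \in BG.1))) => [inf_B|fin_B].
  right=> N; have [n le_Nn Bn] := inf_B N.
  have [m le_nm Gm] := respond BG BG_in n Bn.
  by exists m; first exact: leq_trans le_nm.
left; have [N fin] := not_infinitely_often fin_B.
by exists N => n /fin/negP.
Qed.

Lemma accepting_infinitely_often_B BG :
  accepting A t -> BG \in streett A ->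
  infinitely_often (fun n => t n \in BG.1) -> exists n, t n \in BG.2.
Proof.
move=> acc BG_in inf_B; case: (acc BG BG_in) => [[N fin_B]|inf_G].
  by have [n /fin_B/negP] := inf_B N.
by have [n _ Gn] := inf_G 0; exists n.
Qed.

End Streett.

Lemma reach_clause (Q : Type) (phi : pbf Q) e e' p p' :
  is_clause phi -> reach phi e p = reach phi e' p'.
Proof.
elim: phi p p' => [q|f IHf g IHg|//] p p' //= /andP[cf cg].
by rewrite (IHf _ (rcons p' false)) // (IHg _ (rcons p' true)).
Qed.

Lemma box_clause (Sigma Q : finType) (A : automaton Sigma Q) a beta q q' e p :
  is_box A a beta -> is_clause (delta A q a) ->
  q' \in reach (delta A q a) e p -> (q, a, q') \in beta.
Proof.
move=> [s ->] clause_q; rewrite inE /= eqxx.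
by rewrite (reach_clause _ (s q) _ [::] clause_q).
Qed.

Inductive state := Hub | Req of bool | Vote | Grant of bool.

Definition state_code (q : state) : bool + (bool + bool) :=
  match q with
  | Hub => inl false
  | Vote => inl true
  | Req b => inr (inl b)
  | Grant b => inr (inr b)
  end.

Definition state_decode (x : bool + (bool + bool)) : state :=
  match x with
  | inl false => Hub
  | inl true => Vote
  | inr (inl b) => Req b
  | inr (inr b) => Grant b
  end.

Lemma state_codeK : cancel state_code state_decode. Proof. by case. Qed.
HB.instance Definition _ := Finite.copy state (can_type state_codeK).

Definition hub_move : pbf state :=
  PAnd (PAnd (PAtom Hub) (PAtom (Req false))) (PAtom (Req true)).

Definition transition (q : state) (_ : unit) : pbf state :=
  match q with
  | Hub | Grant _ => hub_move
  | Req _ => PAtom Vote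
  | Vote => POr (PAtom (Grant false)) (PAtom (Grant true))
  end.

Definition request_pair (b : bool) : {set trans unit state} * {set trans unit state} :=
  ([set t | t.2 == Req b], [set t | t.2 == Grant b]).

Definition request_grant : automaton unit state :=
  Automaton Hub transition [seq request_pair b | b <- [:: false; true]].

Lemma request_pair_in b : request_pair b \in streett request_grant.
Proof. by apply: map_f; case: b. Qed.

Definition grant_last_request : eve_strategy unit state :=
  fun h _ _ _ => (last (Hub, tt, [::]) h).1.1 == Req true.

Section EveWins.
Variables (w : nat -> unit) (adam : nat -> seq bool -> bool).

Let play_state n := (play request_grant grant_last_request w adam n).2.
Let history n := (play request_grant grant_last_request w adam n).1.

Lemma play_stateS n :
  play_state n.+1 = (descend (transition (play_state n) (w n))
    (grant_last_request (history n) (play_state n) (w n)) (adam n) [::]).1.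
Proof. by []. Qed.

Lemma last_history n : (last (Hub, tt, [::]) (history n.+1)).1.1 = play_state n.
Proof. by rewrite /history /= last_rcons. Qed.

Lemma play_grants_request n b :
  play_state n.+1 = Req b -> play_state n.+3 = Grant b.
Proof.
move=> req_b; have at_vote : play_state n.+2 = Vote by rewrite play_stateS req_b.
by rewrite play_stateS at_vote /= /grant_last_request last_history req_b; case: b {req_b}.
Qed.

Lemma grant_last_request_accepting :
  accepting request_grant (play_trans request_grant grant_last_request w adam).
Proof.
apply: accepting_of_responses => _ /mapP[b _ ->] n; rewrite !inE => /eqP req_b.
exists n.+2; first by rewrite leqW.
by rewrite inE; apply/eqP; exact: play_grants_request.
Qed.

End EveWins.

Section BoxesLose.
Variable beta : nat -> {set trans unit state}.
Hypothesis beta_box : forall n, is_box request_grant tt (beta n).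

Definition vote n : bool := (Vote, tt, Grant true) \in beta n.

Lemma vote_in_box n : (Vote, tt, Grant (vote n)) \in beta n.
Proof.
rewrite /vote; case no_true: (_ \in beta n) => //.
by have [s box_n] := beta_box n; move: no_true; rewrite box_n !inE /=; case: (s Vote [::]).
Qed.

Variable c : bool.

Definition path_step n (q : state) : state :=
  match q with
  | Hub | Grant _ => if vote n.+2 == c then Req (~~ c) else Hub
  | Req _ => Vote
  | Vote => Grant (vote n)
  end.

Fixpoint path n : state :=
  if n is m.+1 then path_step m (path m) else Hub.

Lemma pathS n : path n.+1 = path_step n (path n).
Proof. by []. Qed.

Definition path_trans n : trans unit state := (path n, tt, path n.+1).

Lemma path_trans_in_box n : path_trans n \in beta n.
Proof.
rewrite /path_trans /=; case: (path n) => [|b||b]; try exact: vote_in_box.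
all: apply: (box_clause (e := fun _ => false) (p := [::]) (beta_box n)) => //=.
all: by case: ifP; case: c.
Qed.

Definition path_invariant n (q : state) : Prop :=
  match q with
  | Hub => True
  | Req b => b = ~~ c /\ vote n.+1 = c
  | Vote => vote n = c
  | Grant b => b = c
  end.

Lemma path_invariantP n : path_invariant n (path n).
Proof.
elim: n => //= n; case: (path n) => [|b|vote_n|b] /=.
- by case: eqP.
- by case.
- by rewrite vote_n.
- by case: eqP.
Qed.

Lemma path_never_grants n : path n != Grant (~~ c).
Proof.
by move: (path_invariantP n); case: (path n) => // b ->; case: c.
Qed.

Lemma path_requests n :
  vote n.+4 = c -> exists2 m, n <= m & path m.+1 = Req (~~ c).
Proof.
move=> vote_c; have := path_invariantP n.+2.
case path_n2: (path n.+2) => [|b||b] inv_n2.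
1,4: by exists n.+2; [rewrite leqW | rewrite pathS path_n2 /= vote_c eqxx].
- by case: inv_n2 => <- _; exists n.+1; first exact: leqnSn.
- move: path_n2; rewrite pathS; have := path_invariantP n.+1.
  case path_n1: (path n.+1) => [|b||b] //=; try by case: (_ == c).
  by case=> <- _ _; exists n.
Qed.

Lemma path_rejecting :
  infinitely_often (fun n => vote n = c) -> ~ accepting request_grant path_trans.
Proof.
move=> inf_c acc.
have inf_req : infinitely_often (fun n => path_trans n \in (request_pair (~~ c)).1).
  move=> N; have [j le_j vote_j] := inf_c N.+4.
  have [k def_j] : exists k, j = k.+4.
    by exists (j - 4); rewrite -addn4 subnK // (leq_trans _ le_j).
  rewrite def_j in le_j vote_j; have [m le_km req_m] := path_requests vote_j.
  by exists m; [exact: leq_trans le_km | rewrite inE; apply/eqP].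
have [n] := accepting_infinitely_often_B acc (request_pair_in (~~ c)) inf_req.
by rewrite inE (negbTE (path_never_grants n.+1)).
Qed.

End BoxesLose.

Theorem mainTheorem12 :
  exists (Sigma Q : finType) (A : automaton Sigma Q),
    (forall q a, is_dnf (delta A q a)) /\
    exists_GFG A /\
    ~ (exists f : seq Sigma -> {set trans Sigma Q},
         (forall (u : seq Sigma) (a : Sigma), is_box A a (f (rcons u a))) /\
         (forall w : nat -> Sigma, inL A w ->
            univ_accepting A (fun i => f (word_prefix w i.+1)))).
Proof.
exists unit, state, request_grant; split; first by case.
split; first by exists grant_last_request => w adam _; apply: grant_last_request_accepting.
case=> f [f_box f_univ].
pose w (_ : nat) := tt.
pose beta i := f (word_prefix w i.+1).
have beta_box i : is_box request_grant tt (beta i).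
  by rewrite /beta word_prefixS; apply: f_box.
have [c inf_c] := bool_infinitely_often (vote beta).
apply: (path_rejecting inf_c); apply: f_univ => //.
- by exists grant_last_request; apply: grant_last_request_accepting.
- exact: path_trans_in_box.
Qed.
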